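(* Let $M>0$ and assume (Amax) and (Amin). Then the closure $\mathrm{Cl}(\mathcal D(M))$ of $\mathcal D(M)$ in $L^\infty([0,1])$ (supremum norm) is a compact subset of $C^0([0,1])$.
   Context: Fix integers $K\ge1$, $d\ge1$, $\sigma_-\in(0,1)$; $[K']=\{1,\dots,K'\}$; $\Delta_{K'}$ = probability vectors on $[K']$; $\Sigma^{\sigma_-}_{K'}$ = $K'\times K'$ stochastic matrices with all entries $\ge\sigma_-$; $\mathbb R_d[X]$ = real polynomials of degree $\le d$ viewed as functions on $\mathbb R_+$; $\Gamma$ a compact (for pointwise convergence) set of probability densities on $\mathbb R$. $\Theta=\bigcup_{K'=1}^K\{[K']\}\times\Delta_{K'}\times\Sigma^{\sigma_-}_{K'}\times\Gamma^{K'}\times(\mathbb R_d[X])^{K'}$, elements $\theta=(K^\theta,\pi^\theta,Q^\theta,\gamma^\theta,T^\theta)$ with trends $T^\theta_x\in\mathbb R_d[X]$. The true parameter is $\theta^*=(K^*,\pi^*,Q^*,\gamma^*,T^* )\in\Theta$. (Amax): there is a nonincreasing $g:\mathbb R_+\to\mathbb R_+$, $g\to0$ at $\infty$, with $\gamma(z)\le g(|z|)$ for all $\gamma\in\Gamma$. (Amin): there is a nonincreasing $m$ with $\gamma(z)\ge m(|z|)>0$ for all $\gamma\in\Gamma$. Blocks. $x\mathcal R^*x'$ iff $T^*_x-T^*_{x'}$ is constant; $\mathcal B^*=[K^*]/\mathcal R^*$, $\mathbf b^*$ the quotient map; $\mathbb T^*_b=T^*_{\min b}$; $\Delta(x)=T^*_x(1)-\mathbb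 T^*_{\mathbf b^*(x)}(1)$, $\|\Delta\|_\infty=\max_x|\Delta(x)|$. $E(t)=\min_{b\ne b'}|\mathbb T^*_b(t)-\mathbb T^*_{b'}(t)|$ ($+\infty$ if one block), $n_1(M)=\inf\{n:\forall t\ge n,\ E(t)>2M\}$. $\Theta^{OK}_n(M)$ is the set of $\theta\in\Theta$ such that every $x^*\in[K^*]$ has some $x\in[K^\theta]$ with $\sup_{[0,n]}|T^*_{x^*}-T^\theta_x|\le M$, and every $x\in[K^\theta]$ has some $x^*$ with $\sup_{[0,n]}|T^*_{x^*}-T^\theta_x|\le M$. For $n\ge n_1(M+\|\Delta\|_\infty)$ and $\theta\in\Theta^{OK}_n(M)$, $\mathbf b^\theta(x)$ is the unique $b\in\mathcal B^*$ with $\max_{t\in\{1,\dots,n\}}|\mathbb T^*_b(t)-T^\theta_x(t)|\le M+\|\Delta\|_\infty$, and $D^{\theta,n}_x:u\in[0,1]\mapsto T^\theta_x(nu)-\mathbb T^*_{\mathbf b^\theta(x)}(nu)$. Finally $\mathcal D(M)=\bigcup_{n\ge\max(4K(d+1),\,n_1(M+\|\Delta\|_\infty))}\{D^{\theta,n}_x:\theta\in\Theta^{OK}_n(M),x\in[K^\theta]\}$. *)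

From HB Require Import structures.
From mathcomp Require Import all_boot all_order all_algebra.
From mathcomp Require Import all_classical all_reals all_analysis.
Set Implicit Arguments. Unset Strict Implicit. Unset Printing Implicit Defensive.
Import Order.TTheory GRing.Theory Num.Theory.
Import numFieldNormedType.Exports.
Local Open Scope classical_set_scope.
Local Open Scope ring_scope.

Section Defs.
Variable R : realType.

Record param := Param {
  pK : nat;
  ppi : 'I_pK -> R;
  pQ : 'I_pK -> 'I_pK -> R;
  pgam : 'I_pK -> R -> R;
  pT : 'I_pK -> {poly R} }.
Arguments ppi : clear implicits.
Arguments pQ : clear implicits.
Arguments pgam : clear implicits.
Arguments pT : clear implicits.

Definition is_density (g : R -> R) : Prop :=
  [/\ measurable_fun [set: R] g, (forall z, 0 <= g z) &
      (\int[@lebesgue_measure R]_x (g x)%:E = 1)%E].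

Definition inTheta (K d : nat) (sigm : R) (Gam : set (R -> R)) (th : param) : Prop :=
  [/\ (1 <= pK th <= K)%N,
      (forall x, 0 <= ppi th x) /\ \sum_x ppi th x = 1,
      (forall x y, sigm <= pQ th x y) /\ (forall x, \sum_y pQ th x y = 1),
      (forall x, Gam (pgam th x)) &
      (forall x, (size (pT th x) <= d.+1)%N)].

Variable ths : param. (* the true parameter theta^* *)

Local Notation Ks := (pK ths).
Local Notation Ts := (pT ths).

Definition blockrel (x y : 'I_Ks) : Prop :=
  exists c : R, forall t : R, 0 <= t -> (Ts x).[t] - (Ts y).[t] = c.

(* min of the block of x; the block b of x is represented by rep x,
   and \mathbb T^*_b = T^*_{min b} = Ts (rep x). *)
Definition rep (x : 'I_Ks) : 'I_Ks :=
  [arg min_(y < x | `[< blockrel y x >]) (y : nat)].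

Definition Delta (x : 'I_Ks) : R := (Ts x).[1] - (Ts (rep x)).[1].

Definition normDelta : R := \big[Num.max/0]_(x : 'I_Ks) `|Delta x|.

(* E(t) > c, with E(t) = min over pairs of distinct blocks (+oo if one block) *)
Definition E_gt (c t : R) : Prop :=
  forall r r' : 'I_Ks, rep r = r -> rep r' = r' -> r <> r' ->
    c < `|(Ts r).[t] - (Ts r').[t]|.

Definition n1_set (M' : R) (n : nat) : Prop :=
  forall t : R, n%:R <= t -> E_gt (2 * M') t.

(* n >= n_1(M') = inf (n1_set M') *)
Definition ge_n1 (M' : R) (n : nat) : Prop :=
  exists2 m : nat, (m <= n)%N & n1_set M' m.

(* theta \in Theta^OK_n(M) (trend condition; membership in Theta separate) *)
Definition ThetaOK (n : nat) (M : R) (th : param) : Prop :=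
  (forall xs : 'I_Ks, exists x : 'I_(pK th),
     forall t : R, 0 <= t <= n%:R -> `|(Ts xs).[t] - (pT th x).[t]| <= M) /\
  (forall x : 'I_(pK th), exists xs : 'I_Ks,
     forall t : R, 0 <= t <= n%:R -> `|(Ts xs).[t] - (pT th x).[t]| <= M).

Definition bcond (n : nat) (M : R) (th : param) (x : 'I_(pK th)) (r : 'I_Ks) : Prop :=
  rep r = r /\
  forall i : nat, (1 <= i <= n)%N ->
    `|(Ts r).[i%:R] - (pT th x).[i%:R]| <= M + normDelta.
Arguments bcond : clear implicits.

Definition Dset (K d : nat) (sigm : R) (Gam : set (R -> R)) (M : R) : set (R -> R) :=
  [set f | exists (n : nat) (th : param) (x : 'I_(pK th)) (r : 'I_Ks),
     [/\ (4 * K * d.+1 <= n)%N /\ ge_n1 (M + normDelta) n,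
         inTheta K d sigm Gam th /\ ThetaOK n M th,
         bcond n M th x r /\ (forall r', bcond n M th x r' -> r' = r) &
         f = fun u => (pT th x).[n%:R * u] - (Ts r).[n%:R * u]]].

End Defs.

From mathcomp Require Import all_boot all_order all_algebra.
From mathcomp Require Import all_classical all_reals all_analysis.
From mathcomp Require Import ring lra zify.
Import Order.TTheory GRing.Theory Num.Theory.
Import numFieldNormedType.Exports.
Local Open Scope classical_set_scope.
Local Open Scope ring_scope.

(** Every function of [D(M)] is a polynomial of degree at most [d] in [u]
  which, by the definition of [b^theta(x)], is bounded by [M + ||Delta||] at
  the [n >= d + 1] grid points [i / n].  Lagrange interpolation on [d + 1]
  well-spread grid points then bounds it on all of [[0, 1]] by a constant [B]
  independent of [n] and [theta], so [D(M)] lies in the image of the compact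
  box [[-B, B]^(d+1)] under the continuous map sending values at the nodes
  [k / (d + 1)] to the interpolating polynomial.  The closure of this compact
  set is compact, and uniform limits of polynomials are continuous. *)

(* A cluster point in [A] of the traces on [A] of the entourage-thickenings of
   the sets of [F] is a cluster point of [F]. *)
Lemma uniform_compact_closure (X : uniformType) (A : set X) :
  compact A -> compact (closure A).
Proof.
move=> cA F PF FclA.
pose D := [set BE : set X * set (X * X) | F BE.1 /\ entourage BE.2].
pose thicken (BE : set X * set (X * X)) :=
  A `&` [set y | exists2 b, BE.1 b & BE.2 (b, y)].
have GF : Filter (filter_from D thicken).
  apply: filter_from_filter.
    by exists (setT, setT); split; [exact: filterT | exact: entourageT].
  move=> [B1 E1] [B2 E2] [/= FB1 eE1] [/= FB2 eE2].
  exists (B1 `&` B2, E1 `&` E2).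
    by split; [exact: filterI | exact: filterI].
  by move=> y [Ay [b [/= b1 b2] [/= e1 e2]]]; split; split=> //; exists b.
have PG : ProperFilter (filter_from D thicken).
  apply: filter_from_proper => -[B E] [/= FB eE].
  have [b [Bb clb]] := filter_ex (filterI FB FclA).
  have [y [Ay Eby]] := clb _ (nbhs_entourage b eE).
  by exists y; split=> //; exists b => //; exact/xsectionP.
have GA : filter_from D thicken A.
  exists (setT, setT); first by split; [exact: filterT | exact: entourageT].
  by move=> y [].
have [x [Ax clx]] := cA _ PG GA.
exists x; split; first exact: subset_closure.
move=> B C FB /nbhsP [E eE sEC].
have eE2 := entourage_split_ent eE.
have DBE : D (B, (split_ent E)^-1%relation) by split=> //; exact: entourage_inv.
have [y [[Ay [b Bb Eby]] /xsectionP Exy]] :=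
  clx _ _ (ex_intro2 _ _ _ DBE (fun z h => h)) (nbhs_entourage x eE2).
exists b; split=> //; apply/sEC/xsectionP.
exact: (entourage_split y eE Exy Eby).
Qed.

Lemma norm_sum_mul_le {R : numDomainType} {n} {a b : 'I_n -> R} {C L : R} :
  0 <= C -> (forall k, `|a k| <= C) -> (forall k, `|b k| <= L) ->
  `|\sum_k a k * b k| <= n%:R * (C * L).
Proof.
move=> C0 ha hb; apply: le_trans (ler_norm_sum _ _ _) _.
rewrite mulr_natl -[n in _ *+ n]card_ord -sumr_const; apply: ler_sum => k _.
by rewrite normrM ler_pM.
Qed.

Lemma norm_lagrange_le {F : realFieldType} {n} {x : nat -> F}
    (n_gt0 : (0 < n)%N) (x_inj : injective x) (i : 'I_n) (t c : F) :
  0 <= c -> (forall j : 'I_n, j != i -> `|t - x j| <= c * `|x i - x j|) ->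
  `|(tnth (n.-lagrange x) i : {poly F}).[t]| <= c ^+ n.-1.
Proof.
move=> c0 ht; rewrite lagrangeE //= hornerM hornerC !horner_prod.
under eq_bigr do rewrite hornerXsubC.
under [X in _ * X]eq_bigr do rewrite hornerXsubC.
rewrite mulrC -prodf_div normr_prod.
have -> : c ^+ n.-1 = \prod_(j < n | j != i) c.
  by rewrite prodr_const; congr (_ ^+ _); rewrite (cardC1 i) card_ord.
apply: ler_prod => j ji; rewrite normr_ge0 /=.
have xij : 0 < `|x i - x j|.
  by rewrite normr_gt0 subr_eq0 (inj_eq x_inj); move: ji; rewrite eq_sym.
by rewrite normrM normfV ler_pdivrMr // ht.
Qed.

Lemma natr_dist_ge1 (R : realDomainType) (j m : nat) :
  j != m -> 1 <= `|j%:R - m%:R : R|.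
Proof.
case: ltngtP => // [jm|mj] _.
  by rewrite distrC -natrB ?(ltnW jm) // ger0_norm ?ler0n // ler1n subn_gt0.
by rewrite -natrB ?(ltnW mj) // ger0_norm ?ler0n // ler1n subn_gt0.
Qed.

(* The interpolation nodes are [1 + j * (n %/ (d + 1))], [j <= d]: they lie
   in [1, n] and are at least [n / (2 (d + 1))] apart. *)
Lemma norm_poly_le_of_grid {R : realFieldType} {d n : nat} {p : {poly R}}
    {C : R} :
  (size p <= d.+1)%N -> (d.+1 <= n)%N ->
  (forall i, (1 <= i <= n)%N -> `|p.[i%:R]| <= C) ->
  forall t, 0 <= t <= n%:R -> `|p.[t]| <= d.+1%:R * (C * (2 * d.+1%:R) ^+ d).
Proof.
move=> sp dn hp t /andP[t0 tn].
set q := (n %/ d.+1)%N.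
have q_gt0 : (0 < q)%N by rewrite divn_gt0.
have qn : (q * d.+1 <= n)%N by exact: leq_divM.
have nq : (n < q.+1 * d.+1)%N by exact: ltn_ceil.
pose x j := (1 + j * q)%N%:R : R.
have x_inj : injective x.
  move=> j k /eqP; rewrite eqr_nat => /eqP xjk; apply/eqP.
  by rewrite -(eqn_pmul2r q_gt0); apply/eqP; lia.
have C0 : 0 <= C.
  by apply: le_trans (normr_ge0 _) (hp 1%N _); rewrite /= (leq_trans _ dn).
rewrite (lagrange_gen (ltn0Sn d) x_inj sp) horner_sum.
under eq_bigr do rewrite hornerCM.
apply: norm_sum_mul_le => // [k|k].
  by apply: hp; have := ltn_ord k; nia.
apply: norm_lagrange_le => // m mk.
have xm_le : `|t - x m| <= n%:R.
  have : x m <= n%:R by rewrite ler_nat; have := ltn_ord m; nia.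
  by rewrite ler_norml; have := ler0n R (1 + m * q); lra.
have xkm_ge : q%:R <= `|x k - x m|.
  rewrite /x !natrD !natrM (addrC 1) addrKA -mulrBl normrM.
  rewrite (ger0_norm (ler0n _ q)).
  by rewrite ler_peMl ?ler0n // natr_dist_ge1 // eq_sym.
apply: (le_trans xm_le); apply: le_trans (ler_wpM2l _ xkm_ge).
  by rewrite -!natrM ler_nat; nia.
by rewrite mulr_ge0 ?ler0n.
Qed.

Section UnitNodes.
Variables (R : realFieldType) (d : nat).

Definition unit_node (j : nat) : R := j%:R / d.+1%:R.

Lemma unit_node_inj : injective unit_node.
Proof.
move=> j k /(congr1 (fun z => z * d.+1%:R)); rewrite /= !divfK ?pnatr_eq0 //.
by move/eqP; rewrite eqr_nat => /eqP.
Qed.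

Lemma unit_node_itv (k : 'I_d.+1) : 0 <= unit_node k <= 1.
Proof.
by rewrite divr_ge0 ?ler0n //= ler_pdivrMr ?ltr0Sn // mul1r ler_nat ltnW.
Qed.

Lemma norm_unit_lagrange_le (k : 'I_d.+1) (u : R) : 0 <= u <= 1 ->
  `|(tnth (d.+1.-lagrange unit_node) k : {poly R}).[u]| <= d.+1%:R ^+ d.
Proof.
move=> /andP[u0 u1].
apply: (norm_lagrange_le (ltn0Sn d) unit_node_inj) => // m mk.
have /andP[m0 m1] := unit_node_itv m.
have /le_trans -> // : `|u - unit_node m| <= 1 by rewrite ler_norml; lra.
rewrite /unit_node -mulrBl normrM normfV (ger0_norm (ler0n _ d.+1)).
by rewrite mulrCA mulfV ?pnatr_eq0 // mulr1 natr_dist_ge1 // eq_sym.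
Qed.

End UnitNodes.

Lemma closure_continuous_within {U : topologicalType} {V : puniformType}
    (A : set U) (W : set {uniform` A -> V}) :
  (forall f, W f -> {within A, continuous f}) ->
  forall f, closure W f -> {within A, continuous f}.
Proof.
move=> Wc f; rewrite closureEcvg => -[G PG [Gf GW]].
apply: (uniform_limit_continuous_subspace PG _ Gf).
by apply: filterS (GW W (fun=> id)) => g /Wc.
Qed.

Section LagrangeInterpolation.
Variables (R : realType) (d : nat).

Local Notation lagrange_basis k :=
  (tnth (d.+1.-lagrange (unit_node R d)) k : {poly R}).

Definition lagrange_interp (a : 'rV[R]_d.+1) : {poly R} :=
  \sum_k a ord0 k *: lagrange_basis k.

Definition lagrange_interp_fun (a : 'rV[R]_d.+1) :
  {uniform` `[0%R, 1%R] -> R} :=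
  horner (lagrange_interp a).

Definition interp_box (B : R) : set 'rV[R]_d.+1 :=
  [set a | forall k, [set` `[-B, B]] (a ord0 k)].

Lemma lagrange_interpE (p : {poly R}) : (size p <= d.+1)%N ->
  p = lagrange_interp (\row_k p.[unit_node R d k]).
Proof.
move=> sp; rewrite {1}(lagrange_gen (ltn0Sn d) (@unit_node_inj R d) sp).
by apply: eq_bigr => k _; rewrite mxE mul_polyC.
Qed.

Lemma lagrange_interp_fun_sub (a b : 'rV[R]_d.+1) (t : R) :
  lagrange_interp_fun a t - lagrange_interp_fun b t =
  \sum_k (a ord0 k - b ord0 k) * (lagrange_basis k).[t].
Proof.
rewrite /lagrange_interp_fun /lagrange_interp !horner_sum -sumrB.
by apply: eq_bigr => k _; rewrite !hornerZ mulrBl.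
Qed.

Lemma continuous_lagrange_interp : continuous lagrange_interp_fun.
Proof.
move=> a; apply/(cvg_app_entourageP _ (nbhs_filter a)) => A.
rewrite uniform_entourage => -[E eE sA].
rewrite -entourage_ballE in eE; case: eE => e /= e_gt0 sE.
pose L : R := d.+1%:R ^+ d.
have L_gt0 : 0 < L by rewrite exprn_gt0 ?ltr0Sn.
pose delta := e / (2 * (d.+1%:R * L)).
have delta_gt0 : 0 < delta by rewrite divr_gt0 ?mulr_gt0 ?ltr0Sn.
apply: filterS (nbhsx_ballx a delta delta_gt0) => b [_ ab].
apply: sA => t t01; apply: sE; rewrite /ball /= lagrange_interp_fun_sub.
apply: le_lt_trans (norm_sum_mul_le (ltW delta_gt0) _ _) _ => [k|k|].
- exact/ltW/ab.
- by apply: norm_unit_lagrange_le; rewrite /= in_itv in t01.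
have -> : d.+1%:R * (delta * L) = e / 2.
  by rewrite /delta; field; rewrite !gt_eqF //; have := ler0n R d; lra.
lra.
Qed.

Lemma compact_lagrange_interp_box (B : R) :
  compact (lagrange_interp_fun @` interp_box B).
Proof.
apply: continuous_compact; last first.
  apply: (@rV_compact _ _ (fun=> [set` `[-B, B]])) => k.
  exact: segment_compact.
apply: continuous_subspaceT; exact: continuous_lagrange_interp.
Qed.

Lemma bounded_poly_in_lagrange_interp_box (B : R) (p : {poly R}) :
  (size p <= d.+1)%N -> (forall u, 0 <= u <= 1 -> `|p.[u]| <= B) ->
  (lagrange_interp_fun @` interp_box B) (horner p).
Proof.
move=> sp pB; exists (\row_k p.[unit_node R d k]).
  by move=> k; rewrite mxE /= in_itv /= -ler_norml pB ?unit_node_itv.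
by rewrite /lagrange_interp_fun -lagrange_interpE.
Qed.

End LagrangeInterpolation.

Lemma Dset_bounded_poly {R : realType} {K d : nat} {sigm : R}
    {Gam : set (R -> R)} {ths : param R} {M : R} {f : R -> R} :
  (1 <= K)%N -> inTheta K d sigm Gam ths -> Dset ths K d sigm Gam M f ->
  exists2 p : {poly R}, (size p <= d.+1)%N /\
    (forall u, 0 <= u <= 1 ->
       `|p.[u]| <= d.+1%:R * ((M + normDelta ths) * (2 * d.+1%:R) ^+ d)) &
    f = horner p.
Proof.
move=> K1 [_ _ _ _ sTs].
move=> [n [th [x [r [[nK _] [[_ _ _ _ sT] _] [[_ hb] _] ->]]]]].
set p := pT x - pT r.
have sp : (size p <= d.+1)%N.
  by rewrite (leq_trans (size_polyD _ _)) // size_polyN geq_max sT sTs.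
have dn : (d.+1 <= n)%N by nia.
have pn u : (p \Po (n%:R *: 'X)).[u] = p.[n%:R * u].
  by rewrite horner_comp hornerZ hornerX.
exists (p \Po (n%:R *: 'X)); last by apply/funext => u; rewrite pn !hornerE.
split.
  rewrite size_comp_poly2 // size_scale ?size_polyX // pnatr_eq0.
  by rewrite -lt0n (leq_trans _ dn).
move=> u /andP[u0 u1]; rewrite pn; apply: (norm_poly_le_of_grid sp dn).
  by move=> i ni; rewrite /p !hornerE distrC hb.
by rewrite mulr_ge0 ?ler0n //= ler_piMr ?ler0n.
Qed.

Theorem proposition5 (R : realType) (K d : nat) (sigm : R) (Gam : set (R -> R))
  (ths : param R) (M : R) :
  (1 <= K)%N -> (1 <= d)%N -> 0 < sigm < 1 ->
  (forall g, Gam g -> is_density g) ->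
  compact (Gam : set {ptws R -> R}) ->
  (* (Amax) *)
  (exists g : R -> R,
     [/\ (forall a b, 0 <= a -> a <= b -> g b <= g a),
         (forall a, 0 <= a -> 0 <= g a),
         g x @[x --> +oo] --> 0 &
         forall gam, Gam gam -> forall z, gam z <= g `|z|]) ->
  (* (Amin) *)
  (exists m : R -> R,
     [/\ (forall a b, 0 <= a -> a <= b -> m b <= m a),
         (forall a, 0 <= a -> 0 < m a) &
         forall gam, Gam gam -> forall z, m `|z| <= gam z]) ->
  inTheta K d sigm Gam ths ->
  0 < M ->
  let ClD := closure (Dset ths K d sigm Gam M : set {uniform` `[0%R, 1%R] -> R}) in
  compact ClD /\
  (forall f, ClD f -> {within `[0%R, 1%R], continuous f}).
Proof.
move=> K1 _ _ _ _ _ _ inThs _ ClD.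
pose B := d.+1%:R * ((M + normDelta ths) * (2 * d.+1%:R) ^+ d).
pose P := lagrange_interp_fun R d @` interp_box R d B.
have DP : Dset ths K d sigm Gam M `<=` P.
  move=> f /(Dset_bounded_poly K1 inThs) [p [sp pB] ->].
  exact: bounded_poly_in_lagrange_interp_box.
have ClDP : ClD `<=` closure P by exact: closureS.
split.
  apply: subclosed_compact ClDP; first exact: closed_closure.
  exact/uniform_compact_closure/compact_lagrange_interp_box.
apply: closure_continuous_within => f /DP [a _ <-].
by apply: continuous_subspaceT => t; exact: continuous_horner.
Qed.
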